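(* Let $f:\mathbb{R}^m\to\mathbb{R}\cup\{+\infty\}$ be a proper lower semicontinuous convex function and let $\bar x\in S_f$ be such that $\min_{\|h\|=1}f'(\bar x,h)\neq 0$. Then the inequality $f(x)\le 0$ has a local error bound at $\bar x$, and moreover $$\tau_{\min}(f,\bar x)\le \frac{1}{\left|\min_{\|h\|=1}f'(\bar x,h)\right|}.$$
   Context: $\mathbb{R}^m$ carries the Euclidean norm, $B(\bar x,\delta)$ is the closed ball of radius $\delta$ around $\bar x$, and $d(x,D)=\inf\{\|x-y\|:y\in D\}$ (with $\inf\emptyset=+\infty$). $f'(\bar x,h):=\lim_{t\to0^+}\frac{f(\bar x+th)-f(\bar x)}{t}$ is the directional derivative. $S_f:=\{x\in\mathbb{R}^m: f(x)\le 0\}$. The inequality $f(x)\le0$ has a local error bound at $\bar x$ if there exist $\tau,\delta\in(0,+\infty)$ with $d(x,S_f)\le\tau[f(x)]_+$ for all $x\in B(\bar x,\delta)$, where $[t]_+=\max\{t,0\}$. The local error bound modulus is $\tau_{\min}(f,\bar x):=\inf\{\tau>0:\text{there exists }\delta>0\text{ such that }d(x,S_f)\le\tau[f(x)]_+\ \forall x\in B(\bar x,\delta)\}$. *)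

From HB Require Import structures.
From mathcomp Require Import all_boot all_order all_algebra.
From mathcomp Require Import all_classical all_reals all_analysis.
Set Implicit Arguments. Unset Strict Implicit. Unset Printing Implicit Defensive.
Import Order.TTheory GRing.Theory Num.Theory.
Import numFieldNormedType.Exports.
Local Open Scope classical_set_scope.
Local Open Scope ring_scope.

Section Defs.
Variables (R : realType) (m : nat).
Implicit Types (x y h : 'rV[R]_m) (f : 'rV[R]_m -> \bar R).

Definition enorm x : R := Num.sqrt (\sum_(i < m) x ord0 i ^+ 2).

Definition cball xbar (delta : R) : set 'rV[R]_m :=
  [set x | enorm (x - xbar) <= delta].

(* d(x, D) = inf { ||x - y|| : y in D }, with inf emptyset = +oo *)
Definition edist x (D : set 'rV[R]_m) : \bar R :=
  ereal_inf [set (enorm (x - y))%:E | y in D].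

Definition Sf f : set 'rV[R]_m := [set x | (f x <= 0)%E].

Definition proper_fun f := (forall x, f x != -oo%E) /\ (exists x, f x != +oo%E).

Definition convex_fun f := forall x y (t : R), 0 <= t <= 1 ->
  (f ((1 - t) *: x + t *: y)%R <= (1 - t)%:E * f x + t%:E * f y)%E.

Definition lsc_fun f := forall x (a : R), (a%:E < f x)%E ->
  exists2 delta : R, 0 < delta &
    forall y, enorm (y - x) < delta -> (a%:E < f y)%E.

Definition dir_deriv f xbar h : \bar R :=
  lim ((fun t : R => ((f (xbar + t *: h)%R - f xbar) * (t^-1)%:E)%E) @ 0^'+).

Definition error_bound_with f xbar (tau delta : R) :=
  forall x, cball xbar delta x ->
    (edist x (Sf f) <= tau%:E * maxe (f x) 0)%E.

Definition has_local_error_bound f xbar :=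
  exists tau delta : R, 0 < tau /\ 0 < delta /\ error_bound_with f xbar tau delta.

(* tau_min(f, xbar), as an extended real (inf emptyset = +oo) *)
Definition tau_min f xbar : \bar R :=
  ereal_inf [set tau%:E | tau in
    [set tau : R | 0 < tau /\ exists2 delta : R, 0 < delta &
                                 error_bound_with f xbar tau delta]].

End Defs.

(* 1 / |v| for v in \bar R, with the convention 1/(+oo) = 0 *)
Definition inv_abs_e {R : realType} (v : \bar R) : \bar R :=
  match v with
  | r%:E => (`|r|^-1)%:E
  | _ => 0%E
  end.

From Pilot Require Import Defs.
From HB Require Import structures.
From mathcomp Require Import all_boot all_order all_algebra.
From mathcomp Require Import all_classical all_reals all_analysis.
From mathcomp Require Import ring lra.
Set Implicit Arguments. Unset Strict Implicit. Unset Printing Implicit Defensive.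
Import Order.TTheory GRing.Theory Num.Theory.
Local Open Scope classical_set_scope.
Local Open Scope ring_scope.

(* Difference quotients of a convex function are nondecreasing in t, so
   f'(xbar, h) is their infimum over t > 0.  If f(xbar) < 0, the segment from x
   to xbar meets S_f within f(x) |x - xbar| / |f(xbar)| of x, so every modulus
   works.  If f(xbar) = 0 and the minimal slope v is positive, then
   f(x) >= v |x - xbar|, and xbar itself gives d(x, S_f) <= f(x) / v.  If v < 0,
   some z = xbar + t h0 has f(z) < v' t with v' slightly above v; for x within a
   small multiple of t of xbar, the zero of f on the segment [x, z] lies within
   f(x) |x - z| / |f(z)|, roughly f(x) / |v|, of x. *)

Section EuclideanNorm.
Variables (R : realType) (m : nat).
Implicit Types (x y : 'rV[R]_m).

Lemma enorm_ge0 x : 0 <= enorm x.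
Proof. exact: sqrtr_ge0. Qed.

Lemma enorm_sqr x : enorm x ^+ 2 = \sum_(i < m) x ord0 i ^+ 2.
Proof. by rewrite sqr_sqrtr // sumr_ge0 // => i _; exact: sqr_ge0. Qed.

Lemma enorm_le x (r : R) : 0 <= r -> enorm x ^+ 2 <= r ^+ 2 -> enorm x <= r.
Proof. by move=> r0; rewrite ler_pXn2r // nnegrE ?enorm_ge0. Qed.

Lemma enorm_eq0 x : (enorm x == 0) = (x == 0).
Proof.
apply/idP/eqP => [|->]; last first.
  by rewrite /enorm big1 ?sqrtr0 // => i _; rewrite mxE expr0n.
rewrite -sqrf_eq0 enorm_sqr => /eqP x0; apply/rowP => i; rewrite !mxE.
apply/eqP; rewrite -sqrf_eq0; apply/eqP.
by apply: (psumr_eq0P _ x0) => // j _; exact: sqr_ge0.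
Qed.

Lemma enorm0 : enorm (0 : 'rV[R]_m) = 0.
Proof. by apply/eqP; rewrite enorm_eq0. Qed.

Lemma enormZ (a : R) x : enorm (a *: x) = `|a| * enorm x.
Proof.
rewrite /enorm -sqrtr_sqr -sqrtrM ?sqr_ge0 // mulr_sumr.
by congr Num.sqrt; apply: eq_bigr => i _; rewrite mxE exprMn.
Qed.

(* Peter-Paul inequality, coordinatewise: 0 <= e^-1 (a - e b)^2. *)
Lemma enormD_sqr_le (e : R) x y : 0 < e ->
  enorm (x + y) ^+ 2 <= (1 + e^-1) * enorm x ^+ 2 + (1 + e) * enorm y ^+ 2.
Proof.
move=> e0; rewrite !enorm_sqr !mulr_sumr -big_split /=; apply: ler_sum => i _.
rewrite mxE; set a := x ord0 i; set b := y ord0 i; rewrite -subr_ge0.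
have -> : (1 + e^-1) * a ^+ 2 + (1 + e) * b ^+ 2 - (a + b) ^+ 2
          = e^-1 * (a - e * b) ^+ 2 by field; rewrite gt_eqF.
by rewrite mulr_ge0 ?sqr_ge0 ?invr_ge0 ?ltW.
Qed.

Lemma enormD x y : enorm (x + y) <= enorm x + enorm y.
Proof.
have [->|x0] := eqVneq x 0; first by rewrite add0r enorm0 add0r.
have [->|y0] := eqVneq y 0; first by rewrite addr0 enorm0 addr0.
have nx : 0 < enorm x by rewrite lt_def enorm_eq0 x0 enorm_ge0.
have ny : 0 < enorm y by rewrite lt_def enorm_eq0 y0 enorm_ge0.
apply: enorm_le; first by rewrite addr_ge0 ?enorm_ge0.
(* With e = |x| / |y| the Peter-Paul bound is exactly (|x| + |y|)^2. *)
apply: le_trans (enormD_sqr_le x y (divr_gt0 nx ny)) _.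
by rewrite le_eqVlt; apply/orP; left; apply/eqP; field; rewrite !gt_eqF.
Qed.

End EuclideanNorm.

Section ConvexDirectionalDerivative.
Variables (R : realType) (m : nat) (f : 'rV[R]_m -> \bar R).
Hypothesis f_convex : convex_fun f.
Hypothesis f_neq_Ny : forall x, f x != -oo%E.
Variables (xbar h : 'rV[R]_m) (c : R).
Hypothesis fxbar : f xbar = c%:E.

Definition diff_quot (t : R) : \bar R :=
  ((f (xbar + t *: h)%R - f xbar) * (t^-1)%:E)%E.

Lemma diff_quot_nondecreasing : {in `]0, +oo[ &, nondecreasing_fun diff_quot}.
Proof.
move=> s t; rewrite !in_itv /= !andbT => s0 t0 st; rewrite /diff_quot fxbar.
case Ft : (f (xbar + t *: h)) => [b| |].
  3: by have := f_neq_Ny (xbar + t *: h); rewrite Ft.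
  2: by rewrite /= mulyr gtr0_sg ?invr_gt0 // mul1e leey.
have st01 : 0 <= s / t <= 1 by rewrite ler_pdivrMr // mul1r st andbT divr_ge0 // ltW.
have := f_convex xbar (xbar + t *: h) st01.
have -> : (1 - s / t) *: xbar + (s / t) *: (xbar + t *: h) = xbar + s *: h.
  by rewrite scalerBl scale1r scalerDr scalerA -mulrA mulVf ?gt_eqF // mulr1 addrA subrK.
rewrite fxbar Ft -!EFinM -EFinD.
case Fs : (f (xbar + s *: h)) => [d| |].
  3: by have := f_neq_Ny (xbar + s *: h); rewrite Fs.
  2: by rewrite leye_eq.
rewrite -!EFinB -!EFinM !lee_fin ler_pdivrMr // => convex_ineq.
have -> : (b - c) / t * s = (b - c) * (s / t) by rewrite mulrA mulrAC.
by rewrite mulrBl; lra.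
Qed.

Lemma dir_derivE : dir_deriv f xbar h = ereal_inf (diff_quot @` `]0, +oo[).
Proof.
apply: cvg_lim => //.
exact: (nondecreasing_at_right_cvge (BInfty _ false) isT diff_quot_nondecreasing).
Qed.

Lemma dir_deriv_le_diff_quot t : 0 < t -> (dir_deriv f xbar h <= diff_quot t)%E.
Proof.
by move=> t0; rewrite dir_derivE; apply: ereal_inf_lbound; exists t; rewrite //= in_itv /= t0.
Qed.

Lemma dir_deriv_ltP w : (dir_deriv f xbar h < w)%E ->
  exists2 t, 0 < t & (diff_quot t < w)%E.
Proof.
by rewrite dir_derivE => /ereal_inf_lt [_ [t /= + <-]]; rewrite in_itv /= andbT; exists t.
Qed.

End ConvexDirectionalDerivative.

Section ErrorBound.
Variables (R : realType) (m : nat) (f : 'rV[R]_m -> \bar R).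
Hypothesis f_convex : convex_fun f.
Hypothesis f_neq_Ny : forall x, f x != -oo%E.
Implicit Types (x y z xbar h : 'rV[R]_m).

Lemma edist_Sf_le x y : Sf f y -> (Defs.edist x (Sf f) <= (enorm (x - y))%:E)%E.
Proof. by move=> Sy; apply: ereal_inf_lbound; exists y. Qed.

(* The point of the segment [x, z] with parameter a / (a - c) lies in S_f. *)
Lemma edist_Sf_le_segment x z (a c : R) : f x = a%:E -> f z = c%:E ->
  0 < a -> c < 0 -> (Defs.edist x (Sf f) <= (enorm (x - z) / - c * a)%:E)%E.
Proof.
move=> fx fz a0 c0; have ac0 : 0 < a - c by lra.
set s := a / (a - c); have s0 : 0 <= s by rewrite divr_ge0 ?ltW.
have s01 : 0 <= s <= 1 by rewrite s0 /= ler_pdivrMr // mul1r; lra.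
have Sy : Sf f ((1 - s) *: x + s *: z).
  rewrite /Sf /=; apply: le_trans (f_convex x z s01) _.
  rewrite fx fz -!EFinM -EFinD lee_fin.
  suff -> : (1 - s) * a + s * c = 0 by [].
  by rewrite /s; field; rewrite gt_eqF.
apply: le_trans (edist_Sf_le x Sy) _; rewrite lee_fin.
have -> : x - ((1 - s) *: x + s *: z) = s *: (x - z).
  by rewrite scalerBl scale1r scalerBr opprD opprB addrA [x + _]addrCA subrr addr0.
rewrite enormZ ger0_norm // mulrC -mulrA ler_wpM2l ?enorm_ge0 //.
by rewrite /s mulrC ler_pM2r // lef_pV2 ?posrE; lra.
Qed.

Lemma error_bound_with_pos xbar (tau delta : R) : 0 < tau ->
  (forall x (a : R), cball xbar delta x -> f x = a%:E -> 0 < a ->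
     (Defs.edist x (Sf f) <= (tau * a)%:E)%E) ->
  error_bound_with f xbar tau delta.
Proof.
move=> tau0 bound x x_near.
case fx : (f x) => [a| |]; last by have := f_neq_Ny x; rewrite fx.
- have [a_le0|a_gt0] := leP a 0.
    have Sx : Sf f x by rewrite /Sf /= fx lee_fin.
    apply: le_trans (edist_Sf_le x Sx) _.
    rewrite subrr enorm0; apply: mule_ge0; first by rewrite lee_fin ltW.
    by rewrite le_max lexx orbT.
  by rewrite (max_idPl _) ?lee_fin ?(ltW a_gt0) // -EFinM; apply: bound.
- by rewrite (max_idPl _) ?leey // mulry gtr0_sg // mul1e leey.
Qed.

Lemma error_bound_inactive xbar (c tau : R) : f xbar = c%:E -> c < 0 -> 0 < tau ->
  error_bound_with f xbar tau (tau * - c).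
Proof.
move=> fxbar c0 tau0; apply: error_bound_with_pos => // x a x_near fx a0.
apply: le_trans (edist_Sf_le_segment fx fxbar a0 c0) _.
by rewrite lee_fin ler_pM2r // ler_pdivrMr //; lra.
Qed.

Lemma error_bound_sharp xbar (tau delta : R) : f xbar = 0%E -> 0 < tau ->
  (forall h, enorm h = 1 -> ((tau^-1)%:E <= dir_deriv f xbar h)%E) ->
  error_bound_with f xbar tau delta.
Proof.
move=> fxbar tau0 slope; have Sxbar : Sf f xbar by rewrite /Sf /= fxbar.
apply: error_bound_with_pos => // x a _ fx a0.
apply: le_trans (edist_Sf_le x Sxbar) _; rewrite lee_fin.
set t := enorm (x - xbar).
have [t0|t_gt0] := eqVneq t 0; first by rewrite t0 mulr_ge0 ?ltW.
have {t_gt0}t_gt0 : 0 < t by rewrite lt_def t_gt0 enorm_ge0.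
set h := t^-1 *: (x - xbar).
have h1 : enorm h = 1 by rewrite enormZ ger0_norm ?invr_ge0 ?enorm_ge0 // mulVf ?gt_eqF.
have := le_trans (slope h h1) (dir_deriv_le_diff_quot f_convex f_neq_Ny h fxbar t_gt0).
rewrite /diff_quot.
have -> : xbar + t *: h = x by rewrite /h scalerA mulfV ?gt_eqF // scale1r addrC subrK.
rewrite fx fxbar sube0 -EFinM lee_fin ler_pdivlMr // => t_le.
by rewrite -ler_pdivrMl // mulrC.
Qed.

Lemma error_bound_descent xbar h0 (tau eta : R) : f xbar = 0%E -> enorm h0 = 1 ->
  0 < tau -> 0 < eta -> (dir_deriv f xbar h0 < (- ((1 + eta) / tau))%:E)%E ->
  exists2 delta, 0 < delta & error_bound_with f xbar tau delta.
Proof.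
move=> fxbar h0_unit tau0 eta0 /(dir_deriv_ltP f_convex f_neq_Ny fxbar)[t t0].
rewrite /diff_quot fxbar sube0; set z := xbar + t *: h0.
case fz : (f z) => [b| |]; last by have := f_neq_Ny z; rewrite fz.
  2: by rewrite mulyr gtr0_sg ?invr_gt0 // mul1e ltNge leey.
rewrite -EFinM lte_fin ltr_pdivrMr // => b_lt.
have b0 : b < 0.
  by apply: lt_le_trans b_lt _; rewrite mulNr oppr_le0 mulr_ge0 ?divr_ge0 ?ltW //; lra.
(* For |x - xbar| <= eta t we get |x - z| <= (1 + eta) t < tau |f(z)|. *)
exists (eta * t); first exact: mulr_gt0.
apply: error_bound_with_pos => // x a x_near fx a0.
apply: le_trans (edist_Sf_le_segment fx fz a0 b0) _; rewrite lee_fin ler_pM2r //.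
have xz : enorm (x - z) <= (1 + eta) * t.
  have -> : x - z = (x - xbar) + (- t) *: h0 by rewrite opprD addrA scaleNr.
  apply: le_trans (enormD _ _) _.
  by rewrite enormZ h0_unit normrN gtr0_norm // mulr1 mulrDl mul1r addrC lerD2l.
rewrite ler_pdivrMr; last by lra.
apply: le_trans xz _; rewrite -ler_pdivrMl // mulrC; lra.
Qed.

End ErrorBound.

Lemma inv_abs_e_ge0 (R : realType) (v : \bar R) : (0 <= inv_abs_e v)%E.
Proof. by case: v => [r| |] //=; rewrite lee_fin invr_ge0. Qed.

Lemma tau_min_le_modulus (R : realType) (m : nat) (f : 'rV[R]_m -> \bar R) xbar
    (tau delta : R) :
  0 < tau -> 0 < delta -> error_bound_with f xbar tau delta ->
  (tau_min f xbar <= tau%:E)%E.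
Proof.
by move=> tau0 delta0 eb; apply: ereal_inf_lbound; exists tau => //; split => //; exists delta.
Qed.

Section ErrorBoundApprox.
Variables (R : realType) (m : nat) (f : 'rV[R]_m -> \bar R).
Hypothesis f_convex : convex_fun f.
Hypothesis f_neq_Ny : forall x, f x != -oo%E.
Variables (xbar h0 : 'rV[R]_m).
Hypothesis h0_unit : enorm h0 = 1.
Hypothesis h0_min : forall h, enorm h = 1 -> (dir_deriv f xbar h0 <= dir_deriv f xbar h)%E.

Definition has_error_bound_le (r : \bar R) := exists tau delta : R,
  [/\ 0 < tau, 0 < delta, error_bound_with f xbar tau delta & (tau%:E <= r)%E].

Lemma has_error_bound_le_active (e : R) : f xbar = 0%E -> 0 < e ->
  dir_deriv f xbar h0 != 0%E ->
  has_error_bound_le (inv_abs_e (dir_deriv f xbar h0) + e%:E).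
Proof.
move=> fxbar e0; case v_eq : (dir_deriv f xbar h0) => [v| |] v_neq0.
- have [v_lt0|v_gt0|v0] := ltgtP v 0; last by rewrite v0 eqxx in v_neq0.
  + set k := - v; have k0 : 0 < k by rewrite oppr_gt0.
    set tau := k^-1 + e; have tau0 : 0 < tau by rewrite addr_gt0 ?invr_gt0.
    set eta := e * k / 2; have eta0 : 0 < eta by rewrite divr_gt0 ?mulr_gt0.
    have v_lt : (dir_deriv f xbar h0 < (- ((1 + eta) / tau))%:E)%E.
      rewrite v_eq lte_fin ltrNr ltr_pdivrMr //.
      have -> : k * tau = 1 + e * k by rewrite mulrDr mulfV ?gt_eqF // mulrC.
      by rewrite /eta; have := mulr_gt0 e0 k0; lra.
    have [delta delta0 eb] :=
      error_bound_descent f_convex f_neq_Ny fxbar h0_unit tau0 eta0 v_lt.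
    by exists tau, delta; split => //=; rewrite ltr0_norm.
  + exists v^-1, 1; split; rewrite ?invr_gt0 //=.
      by apply: error_bound_sharp; rewrite ?invr_gt0 // invrK -v_eq.
    by rewrite -EFinD lee_fin gtr0_norm // lerDl ltW.
- exists e, 1; split => //; last by rewrite add0e.
  by apply: error_bound_sharp => // h h1; apply: le_trans (h0_min h1); rewrite v_eq leey.
- have v_lt : (dir_deriv f xbar h0 < (- ((1 + 1) / e))%:E)%E by rewrite v_eq ltNyr.
  have [delta delta0 eb] :=
    error_bound_descent f_convex f_neq_Ny fxbar h0_unit e0 ltr01 v_lt.
  by exists e, delta; split; rewrite //= add0e.
Qed.

Lemma has_error_bound_le_inv_abs (e : R) : Sf f xbar -> 0 < e ->
  dir_deriv f xbar h0 != 0%E ->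
  has_error_bound_le (inv_abs_e (dir_deriv f xbar h0) + e%:E).
Proof.
move=> Sxbar e0 v_neq0.
case fxbar : (f xbar) Sxbar => [c| |]; rewrite /Sf /= fxbar ?leye_eq //.
- rewrite lee_fin le_eqVlt => /orP[/eqP c0|c_lt0].
    by apply: has_error_bound_le_active; rewrite ?fxbar ?c0.
  exists e, (e * - c); split; rewrite ?mulr_gt0 ?oppr_gt0 //.
    exact: error_bound_inactive.
  by rewrite lee_paddl ?inv_abs_e_ge0.
- by have := f_neq_Ny xbar; rewrite fxbar.
Qed.

End ErrorBoundApprox.

Theorem proposition3 (R : realType) (m : nat) (f : 'rV[R]_m -> \bar R)
    (xbar : 'rV[R]_m) (h0 : 'rV[R]_m) :
  proper_fun f -> lsc_fun f -> convex_fun f ->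
  Sf f xbar ->
  (* min_{||h|| = 1} f'(xbar, h) is attained at h0 ... *)
  enorm h0 = 1 ->
  (forall h, enorm h = 1 -> (dir_deriv f xbar h0 <= dir_deriv f xbar h)%E) ->
  (* ... and is nonzero *)
  dir_deriv f xbar h0 != 0%E ->
  has_local_error_bound f xbar /\
  (tau_min f xbar <= inv_abs_e (dir_deriv f xbar h0))%E.
Proof.
move=> [f_neq_Ny _] _ f_convex Sxbar h0_unit h0_min v_neq0.
have approx e : 0 < e ->
    has_error_bound_le f xbar (inv_abs_e (dir_deriv f xbar h0) + e%:E).
  by move=> e0; apply: has_error_bound_le_inv_abs.
split.
  by have [tau [delta [tau0 delta0 eb _]]] := approx 1 ltr01; exists tau, delta.
apply/lee_addgt0Pr => e /approx [tau [delta [tau0 delta0 eb tau_le]]].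
exact: le_trans (tau_min_le_modulus tau0 delta0 eb) tau_le.
Qed.
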